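(* Consider the streaming version of the Boolean Hidden Hypermatching problem $BHH_n^t$ (with $n=kt$ for an integer $k$), in which the binary vector $x\in\{0,1\}^n$ arrives as a stream, followed by the hyperedges of $M$ together with the Boolean vector $w$. There exists a streaming interactive proof for $BHH_n^t$ with communication and verifier space cost $O(t\log n\,\log\log n)$ bits.
   Context: $BHH_n^t$: the input is $x\in\{0,1\}^n$, a perfect $t$-uniform hypermatching $M=\{M_1,\dots,M_{n/t}\}$ on $[n]$ with $M_r=\{M_{r,1},\dots,M_{r,t}\}$, and $w\in\{0,1\}^{n/t}$. Let $Mx\in\{0,1\}^{n/t}$ have $r$-th coordinate $\bigoplus_{i=1}^t x_{M_{r,i}}$. It is promised that either $Mx\oplus w=0^{n/t}$ (YES) or $Mx\oplus w=1^{n/t}$ (NO); the goal is to decide which. A streaming interactive proof: a randomized verifier reads the stream once; afterwards it exchanges messages with a prover and outputs an answer or rejects; an honest prover makes it output the correct answer with probability at least $2/3$, and against any prover it outputs the correct answer or rejects with probability at least $2/3$. *)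

From HB Require Import structures.
From mathcomp Require Import all_boot all_order all_algebra.
Set Implicit Arguments. Unset Strict Implicit. Unset Printing Implicit Defensive.
Import Order.TTheory GRing.Theory Num.Theory.

(* Stream tokens: first the bits of x (index, bit), then the hyperedges of M,
   each together with the corresponding bit of w. *)
Inductive token (n t : nat) : Type :=
  | XTok of 'I_n & bool
  | ETok of t.-tuple 'I_n & bool.

(* M is a perfect t-uniform hypermatching on [n] with k hyperedges:
   the hyperedges (listed as t-tuples of vertices) partition [n]. *)
Definition perfect_hypermatching (k t : nat) (M : k.-tuple (t.-tuple 'I_(k * t))) : Prop :=
  perm_eq (flatten [seq val e | e <- M]) (enum 'I_(k * t)).

Definition Mx (k t : nat) (M : k.-tuple (t.-tuple 'I_(k * t)))
  (x : {ffun 'I_(k * t) -> bool}) (r : 'I_k) : bool :=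
  \big[addb/false]_(j < t) x (tnth (tnth M r) j).

(* Answer b = true means YES (Mx + w = 0^k); b = false means NO (Mx + w = 1^k). *)
Definition BHH_answer (k t : nat) (x : {ffun 'I_(k * t) -> bool})
  (M : k.-tuple (t.-tuple 'I_(k * t))) (w : k.-tuple bool) (b : bool) : Prop :=
  forall r : 'I_k, Mx M x r (+) tnth w r = ~~ b.

Definition BHH_stream (k t : nat) (x : {ffun 'I_(k * t) -> bool})
  (M : k.-tuple (t.-tuple 'I_(k * t))) (w : k.-tuple bool) : seq (token (k * t) t) :=
  [seq XTok t i (x i) | i <- enum 'I_(k * t)] ++
  [seq ETok (tnth M r) (tnth w r) | r <- enum 'I_k].

(* Verifier memory states and messages are bit strings.  At each step the
   verifier receives rho fresh uniformly random bits. *)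
Record SIP (n t : nat) := {
  rho : nat;
  init : seq bool;
  step : seq bool -> token n t -> rho.-tuple bool -> seq bool;
  rounds : nat;
  vlen : nat -> nat;   (* bound on the verifier's message length in round i *)
  plen : nat -> nat;   (* bound on the prover's message length in round i *)
  vmsg : nat -> seq bool -> rho.-tuple bool -> seq bool * seq bool;
      (* round i: (new state, message to prover) *)
  vrecv : nat -> seq bool -> seq bool -> rho.-tuple bool -> seq bool;
      (* round i: update state with the prover's reply *)
  output : seq bool -> option bool  (* Some true = YES, Some false = NO, None = reject *)
}.

(* A prover strategy: reply as a function of the verifier messages so far
   (the prover may depend on the whole input, as it is quantified per input). *)
Definition prover := seq (seq bool) -> seq bool.

Local Open Scope ring_scope.

Definition avg (r : nat) (f : r.-tuple bool -> rat) : rat :=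
  (\sum_(c : r.-tuple bool) f c) / (2 ^ r)%:R.

Fixpoint run_stream (n t : nat) (V : SIP n t) (st : seq bool) (s : seq (token n t))
  (F : seq bool -> rat) : rat :=
  match s with
  | [::] => F st
  | a :: s' => avg (fun c => run_stream V (@step n t V st a c) s' F)
  end.

(* Prover replies longer than plen i are truncated (the verifier reads only
   plen i bits). *)
Fixpoint run_inter (n t : nat) (V : SIP n t) (P : prover) (fuel i : nat)
  (tr : seq (seq bool)) (st : seq bool) (G : option bool -> rat) : rat :=
  match fuel with
  | 0 => G (output V st)
  | fuel'.+1 =>
      avg (fun c =>
        let sm := @vmsg n t V i st c in
        let tr' := rcons tr sm.2 in
        let a := take (plen V i) (P tr') in
        avg (fun c' => run_inter V P fuel' i.+1 tr' (@vrecv n t V i sm.1 a c') G))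
  end.

Definition prob_out (n t : nat) (V : SIP n t) (P : prover) (s : seq (token n t))
  (O : pred (option bool)) : rat :=
  run_stream V (init V) s
    (fun st => run_inter V P (rounds V) 0 [::] st (fun o => (O o)%:R)).

Definition SIP_cost_ok (n t : nat) (V : SIP n t) (cost : nat) : Prop :=
  [/\ (size (init V) <= cost)%N,
      (forall st a c, (size st <= cost)%N -> (size (@step n t V st a c) <= cost)%N),
      (forall i st c, (size st <= cost)%N ->
          (size (@vmsg n t V i st c).1 <= cost)%N /\ (size (@vmsg n t V i st c).2 <= vlen V i)%N),
      (forall i st m c, (size st <= cost)%N -> (size m <= plen V i)%N ->
          (size (@vrecv n t V i st m c) <= cost)%N) &
      (\sum_(i < rounds V) (vlen V i + plen V i) <= cost)%N].

Definition SIP_solves_BHH (k t : nat) (V : SIP (k * t) t) : Prop :=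
  forall (x : {ffun 'I_(k * t) -> bool}) (M : k.-tuple (t.-tuple 'I_(k * t)))
         (w : k.-tuple bool) (b : bool),
    perfect_hypermatching M -> BHH_answer x M w b ->
    (exists P : prover,
        prob_out V P (BHH_stream x M w) (pred1 (Some b)) >= 2%:R / 3%:R) /\
    (forall P : prover,
        prob_out V P (BHH_stream x M w) (fun o => o != Some (~~ b)) >= 2%:R / 3%:R).

Definition lg (n : nat) : nat := up_log 2 n.

(* The verifier looks at the first hyperedge only: by the promise, the bit
   (Mx + w)_1 already determines the answer.  Take m = lg n and a field F of
   characteristic 2 with 2^j >= 6 m elements, j = O(log m).  With x~ the
   multilinear extension of x and u~ that of the indicator of M_1, in
   characteristic 2 the XOR (Mx)_1 is the sum of x~ * u~ over the cube {0,1}^m.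
   While streaming, the verifier evaluates x~ and u~ at a random point of F^m;
   afterwards it runs the sum-check protocol on the quadratic polynomial x~ * u~.
   The honest prover always convinces it, and a false total survives each of the
   m rounds with probability at most 2 / |F|, hence overall at most 1/3.  Memory
   and communication are O(m) field elements of j bits. *)

From mathcomp Require Import all_boot all_order all_algebra.
From mathcomp Require Import finfield zify.
Set Implicit Arguments. Unset Strict Implicit. Unset Printing Implicit Defensive.
Import Order.TTheory GRing.Theory Num.Theory.
Local Open Scope ring_scope.

Fixpoint bits (d i : nat) : seq bool :=
  if d is d'.+1 then odd i :: bits d' i./2 else [::].

Lemma size_bits d i : size (bits d i) = d.
Proof. by elim: d i => //= d IH i; rewrite IH. Qed.

Lemma bits_inj d u v : (u < 2 ^ d)%N -> (v < 2 ^ d)%N -> bits d u = bits d v -> u = v.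
Proof.
elim: d u v => [|d IH] u v /=; first by rewrite !ltnS !leqn0 => /eqP-> /eqP->.
rewrite expnS mul2n => hu hv [odd_uv half_uv].
rewrite -(odd_double_half u) -(odd_double_half v) odd_uv.
by rewrite (IH u./2 v./2) // ltn_half_double.
Qed.

Lemma big_nat_double (V : nmodType) N (h : nat -> V) :
  \sum_(0 <= i < N.*2) h i = \sum_(0 <= i < N) (h i.*2 + h i.*2.+1).
Proof.
elim: N => [|N IH]; first by rewrite !big_geq.
by rewrite doubleS !big_nat_recr ?leqW ?leq_double ?leq0n //= IH addrA.
Qed.

Lemma sum_tupleS (T : finType) d (h : d.+1.-tuple T -> nat) :
  (\sum_(s : d.+1.-tuple T) h s = \sum_(X : T) \sum_(s : d.-tuple T) h [tuple of X :: s])%N.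
Proof.
rewrite pair_big /= (reindex (fun p : T * d.-tuple T => [tuple of p.1 :: p.2])) //=.
exists (fun s : d.+1.-tuple T => (thead s, [tuple of behead s])).
  by move=> [X s] _; congr pair; apply: val_inj.
by move=> [[|X s] //= sz] _; apply: val_inj.
Qed.

Section PolyFun.
Variable F : fieldType.

Definition polyfun_le (d : nat) (h : F -> F) :=
  exists2 p : {poly F}, (size p <= d.+1)%N & forall X, h X = p.[X].

Lemma polyfun_le_cst d c : polyfun_le d (fun=> c).
Proof. by exists c%:P => [|X]; rewrite ?hornerC // (leq_trans (size_polyC_leq1 c)). Qed.

Lemma eq_polyfun_le d h h' : h =1 h' -> polyfun_le d h -> polyfun_le d h'.
Proof. by move=> e [p sp hp]; exists p => // X; rewrite -e. Qed.

Lemma polyfun_leD d h1 h2 :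
  polyfun_le d h1 -> polyfun_le d h2 -> polyfun_le d (fun X => h1 X + h2 X).
Proof.
move=> [p sp hp] [q sq hq]; exists (p + q) => [|X]; last by rewrite hornerD hp hq.
by rewrite (leq_trans (size_polyD _ _)) // geq_max sp sq.
Qed.

Lemma polyfun_leM d1 d2 h1 h2 :
  polyfun_le d1 h1 -> polyfun_le d2 h2 -> polyfun_le (d1 + d2) (fun X => h1 X * h2 X).
Proof.
move=> [p sp hp] [q sq hq]; exists (p * q) => [|X]; last by rewrite hornerM hp hq.
by rewrite (leq_trans (size_polyMleq _ _)) //; lia.
Qed.

Lemma polyfun_le_sum (I : Type) (r : seq I) d (h : I -> F -> F) :
  (forall i, polyfun_le d (h i)) -> polyfun_le d (fun X => \sum_(i <- r) h i X).
Proof.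
move=> hh; elim: r => [|i r IH].
  by apply: eq_polyfun_le (polyfun_le_cst d 0) => X; rewrite big_nil.
by apply: eq_polyfun_le (polyfun_leD (hh i) IH) => X; rewrite big_cons.
Qed.

Definition lit (b : bool) (y : F) : F := if b then y else 1 - y.

Lemma lit_linear b : polyfun_le 1 (lit b).
Proof.
case: b; first by exists 'X => [|X]; rewrite ?size_polyX ?hornerX.
exists (1 - 'X) => [|X]; last by rewrite hornerD hornerN hornerX hornerC.
by rewrite (leq_trans (size_polyD _ _)) // size_polyN size_polyX size_polyC geq_max; case: (_ != _).
Qed.

Lemma lit_nat (b c : bool) : lit b c%:R = (b == c)%:R.
Proof. by case: b; case: c; rewrite /= ?subr0 ?subrr. Qed.

Definition mle_delta (m v : nat) (z : seq F) : F :=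
  \prod_(l < m) lit (nth false (bits m v) l) (nth 0 z l).

Lemma mle_delta_linear m v (rho s : seq F) : (size rho < m)%N ->
  polyfun_le 1 (fun X => mle_delta m v (rho ++ X :: s)).
Proof.
move=> lt_rho_m; pose i0 := Ordinal lt_rho_m.
have nth_other X (l : 'I_m) : l != i0 -> nth 0 (rho ++ X :: s) l = nth 0 (rho ++ 0 :: s) l.
  rewrite -val_eqE /= => ne; rewrite !nth_cat; case: ltnP => // ge.
  have : (0 < l - size rho)%N by rewrite subn_gt0 ltn_neqAle eq_sym ne ge.
  by case: (l - size rho)%N.
apply: eq_polyfun_le (polyfun_leM (lit_linear (nth false (bits m v) i0))
  (polyfun_le_cst 0 (\prod_(l < m | l != i0)
     lit (nth false (bits m v) l) (nth 0 (rho ++ 0 :: s) l)))) => X.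
rewrite /mle_delta [RHS](bigD1 i0) //= nth_cat ltnn subnn.
by congr (_ * _); apply: eq_bigr => l /(nth_other X)->.
Qed.

End PolyFun.

Definition bitsF (R : nzSemiRingType) (d i : nat) : seq R := [seq (b : bool)%:R | b <- bits d i].

Lemma mle_delta_cube (F : fieldType) m v i : (v < 2 ^ m)%N -> (i < 2 ^ m)%N ->
  mle_delta m v (bitsF F m i) = (v == i)%:R.
Proof.
move=> lt_v lt_i; rewrite /mle_delta.
under eq_bigr => l _ do rewrite (nth_map false) ?size_bits // lit_nat.
have [<-|ne_vi] := eqVneq v i; first by rewrite big1 // => l _; rewrite eqxx.
have [l ne_l] : exists l : 'I_m, nth false (bits m v) l != nth false (bits m i) l.
  apply/existsP; apply: contra_neqT ne_vi => /existsPn same_bits.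
  apply: (bits_inj lt_v lt_i); apply: (eq_from_nth (x0 := false)) => [|l].
    by rewrite !size_bits.
  by rewrite size_bits => lt_l; apply/eqP; rewrite -[_ == _]negbK (same_bits (Ordinal lt_l)).
by rewrite (bigD1 l) //= (negbTE ne_l) mul0r.
Qed.

Lemma card_eq_horner_le (F : finFieldType) d (p q : {poly F}) :
  (size p <= d.+1)%N -> (size q <= d.+1)%N -> p != q ->
  (#|[pred X | p.[X] == q.[X]]| <= d)%N.
Proof.
move=> sp sq ne_pq; have nz : p - q != 0 by rewrite subr_eq0.
have spq : (size (p - q)%R <= d.+1)%N.
  by rewrite (leq_trans (size_polyD _ _)) // size_polyN geq_max sp sq.
rewrite cardE -ltnS (leq_trans _ spq) // max_poly_roots ?enum_uniq //.
by apply/allP => X; rewrite mem_enum inE /root hornerD hornerN subr_eq0.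
Qed.

Lemma sum_bool_tuple_le (T : finType) d (P : pred (d.-tuple T)) :
  (\sum_(s : d.-tuple T) P s <= #|T| ^ d)%N.
Proof.
rewrite -card_tuple -sum1_card.
by apply: leq_sum => s _; rewrite leq_b1.
Qed.

Section SumCheck.
Variables (F : finFieldType) (m e : nat) (f : seq F -> F).

Definition cube_sum (rho : seq F) : F :=
  \sum_(i < 2 ^ (m - size rho)) f (rho ++ bitsF F (m - size rho) i).

Lemma cube_sum_full rho : size rho = m -> cube_sum rho = f rho.
Proof. by move=> sz_rho; rewrite /cube_sum sz_rho subnn big_ord1 cats0. Qed.

Lemma cube_sum_split rho : (size rho < m)%N ->
  cube_sum rho = cube_sum (rcons rho 0) + cube_sum (rcons rho 1).
Proof.
move=> lt_rho_m; rewrite /cube_sum !size_rcons.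
have -> : (m - size rho = (m - (size rho).+1).+1)%N by lia.
set d := (m - (size rho).+1)%N.
rewrite expnS mul2n -(big_mkord xpredT (fun i => f (rho ++ bitsF F d.+1 i))).
rewrite big_nat_double big_split /= !big_mkord.
by congr (_ + _); apply: eq_bigr => i _; rewrite cat_rcons /bitsF /= odd_double
  ?doubleK ?uphalf_double.
Qed.

Hypothesis f_polyfun : forall rho s, (size rho < m)%N -> polyfun_le e (fun X => f (rho ++ X :: s)).

Lemma cube_sum_polyfun rho : (size rho < m)%N -> polyfun_le e (fun X => cube_sum (rcons rho X)).
Proof.
move=> lt_rho_m; apply: eq_polyfun_le (polyfun_le_sum _ (fun i => f_polyfun _ lt_rho_m)) => X.
by rewrite /cube_sum size_rcons; apply: eq_bigr => i _; rewrite cat_rcons.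
Qed.

Variable G : seq F -> {poly F}.

Fixpoint sumcheck_accepts d rho v (s : seq F) : bool :=
  match d, s with
  | 0, _ => v == f rho
  | d'.+1, X :: s' =>
      ((G rho).[0] + (G rho).[1] == v) && sumcheck_accepts d' (rcons rho X) (G rho).[X] s'
  | _, _ => false
  end.

Lemma sumcheck_complete :
    (forall rho X, (size rho < m)%N -> (G rho).[X] = cube_sum (rcons rho X)) ->
  forall d rho s, (size rho + d)%N = m -> size s = d ->
  sumcheck_accepts d rho (cube_sum rho) s.
Proof.
move=> G_honest; elim=> [|d IH] rho s sz_rho.
  by rewrite /= cube_sum_full ?eqxx // -sz_rho addn0.
case: s => //= X s [sz_s].
have lt_rho_m : (size rho < m)%N by rewrite -sz_rho; lia.
rewrite !G_honest // -cube_sum_split // eqxx.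
by apply: IH; rewrite ?size_rcons -?sz_rho ?addSnnS.
Qed.

Hypothesis G_size : forall rho, (size (G rho) <= e.+1)%N.

Lemma sumcheck_sound d rho v : (size rho + d)%N = m -> v != cube_sum rho ->
  ((\sum_(s : d.-tuple F) sumcheck_accepts d rho v s) * #|F| <= e * d * #|F| ^ d)%N.
Proof.
elim: d rho v => [|d IH] rho v sz_rho ne_v.
  by rewrite big1 // => s _ /=; rewrite -cube_sum_full ?(negbTE ne_v) // -sz_rho addn0.
have lt_rho_m : (size rho < m)%N by rewrite -sz_rho; lia.
rewrite sum_tupleS /=; case: eqP => [first_ok|_]; last by rewrite big1 // => X _; rewrite big1.
have [pS sz_pS pSE] := cube_sum_polyfun lt_rho_m.
have ne_G : G rho != pS.
  by apply: contra_neq ne_v => GE; rewrite -first_ok GE -!pSE -cube_sum_split.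
rewrite (bigID (fun X => (G rho).[X] == pS.[X])) /= mulnDl.
set N := #|F|; set K := (N ^ d)%N.
have agree : (\sum_(X | (G rho).[X] == pS.[X]) \sum_(s : d.-tuple F)
               sumcheck_accepts d (rcons rho X) (G rho).[X] s <= e * K)%N.
  apply: (@leq_trans (\sum_(X | (G rho).[X] == pS.[X]) K)%N).
    by apply: leq_sum => X _; apply: sum_bool_tuple_le.
  by rewrite sum_nat_const leq_mul2r card_eq_horner_le ?orbT.
have disagree : ((\sum_(X | (G rho).[X] != pS.[X]) \sum_(s : d.-tuple F)
               sumcheck_accepts d (rcons rho X) (G rho).[X] s) * N <= N * (e * d * K))%N.
  rewrite big_distrl; apply: (@leq_trans (\sum_(X : F) e * d * K)%N).
    2: by rewrite sum_nat_const.
  rewrite big_mkcond; apply: leq_sum => X _; case: ifP => // ne_X.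
  by apply: IH; rewrite ?pSE // size_rcons -sz_rho addSnnS.
rewrite expnSr -/K; apply: leq_trans (leq_add (leq_mul agree (leqnn N)) disagree) _.
clearbody N K; nia.
Qed.

End SumCheck.

Lemma natr_addb (R : nzSemiRingType) (a b : bool) : 2%:R = 0 :> R ->
  (a (+) b)%:R = a%:R + b%:R :> R.
Proof. by move=> char2; case: a; case: b; rewrite /= ?add0r ?addr0 // -natrD. Qed.

Section BHHPoly.
Variables (F : finFieldType) (m n t : nat) (x : {ffun 'I_n -> bool}) (q : t.-tuple 'I_n).

Definition mle_input (z : seq F) : F := \sum_(i <- enum 'I_n) (x i)%:R * mle_delta m i z.
Definition edge_indicator (z : seq F) : F := \sum_(l < t) mle_delta m (tnth q l) z.
Definition bhh_poly (z : seq F) : F := mle_input z * edge_indicator z.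

Lemma bhh_poly_quadratic rho s : (size rho < m)%N ->
  polyfun_le 2 (fun X => bhh_poly (rho ++ X :: s)).
Proof.
move=> lt_rho_m; apply: (@polyfun_leM _ 1 1).
  apply: polyfun_le_sum => i; apply: (@polyfun_leM _ 0 1); first exact: polyfun_le_cst.
  exact: mle_delta_linear.
by apply: polyfun_le_sum => l; apply: mle_delta_linear.
Qed.

Hypothesis le_n_cube : (n <= 2 ^ m)%N.

Lemma mle_input_cube (v : 'I_n) : mle_input (bitsF F m v) = (x v)%:R.
Proof.
have lt_cube (u : 'I_n) : (u < 2 ^ m)%N by apply: leq_trans (ltn_ord u) le_n_cube.
rewrite /mle_input big_enum /= (bigD1 v) //= mle_delta_cube // eqxx mulr1 big1 ?addr0 //.
by move=> u ne_uv; rewrite mle_delta_cube // val_eqE (negbTE ne_uv) mulr0.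
Qed.

Hypothesis char2 : 2%:R = 0 :> F.

Lemma cube_sum_bhh_poly :
  cube_sum m bhh_poly [::] = (\big[addb/false]_(l < t) x (tnth q l))%:R.
Proof.
have lt_cube l : (tnth q l < 2 ^ m)%N by apply: leq_trans (ltn_ord _) le_n_cube.
rewrite (big_morph (fun b : bool => b%:R : F) (fun a b => natr_addb a b char2)
  (id2 := false) (erefl 0)) /cube_sum subn0.
rewrite /bhh_poly /edge_indicator /=.
under eq_bigr => i _ do rewrite (mulr_sumr (index_enum _)).
rewrite exchange_big /=; apply: eq_bigr => l _.
rewrite (bigD1 (Ordinal (lt_cube l))) //= mle_delta_cube // eqxx mulr1.
rewrite mle_input_cube big1 ?addr0 // => i ne_i.
by rewrite mle_delta_cube // -val_eqE eq_sym in ne_i *; rewrite (negbTE ne_i) mulr0.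
Qed.
End BHHPoly.

Section Transport.
Variables (A B : finType) (card_AB : #|A| = #|B|).

Definition transport (a : A) : B := enum_val (cast_ord card_AB (enum_rank a)).
Definition untransport (b : B) : A := enum_val (cast_ord (esym card_AB) (enum_rank b)).

Lemma transportK : cancel transport untransport.
Proof. by move=> a; rewrite /untransport enum_valK cast_ordK enum_rankK. Qed.

Lemma untransportK : cancel untransport transport.
Proof. by move=> b; rewrite /transport enum_valK cast_ordKV enum_rankK. Qed.
End Transport.

Section BitEncoding.
Variables (T : finType) (j : nat).
Hypothesis card_T : #|T| = (2 ^ j)%N.

Let card_T_bits : #|T| = #|{: j.-tuple bool}|.
Proof. by rewrite card_tuple card_bool. Qed.

Definition to_bits (y : T) : seq bool := val (transport card_T_bits y).
Definition of_bits (s : seq bool) : T :=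
  untransport card_T_bits (insubd [tuple of nseq j false] s).

Lemma size_to_bits y : size (to_bits y) = j.
Proof. exact: size_tuple. Qed.

Lemma to_bitsK : cancel to_bits of_bits.
Proof. by move=> y; rewrite /of_bits /to_bits valKd transportK. Qed.

Definition enc_seq (ys : seq T) : seq bool := flatten (map to_bits ys).
Definition dec_seq (L : nat) (s : seq bool) : seq T := map of_bits (reshape (nseq L j) s).

Lemma shape_map_to_bits ys : shape (map to_bits ys) = nseq (size ys) j.
Proof. by elim: ys => //= y ys ->; rewrite size_to_bits. Qed.

Lemma size_enc_seq ys : size (enc_seq ys) = (size ys * j)%N.
Proof. by rewrite size_flatten shape_map_to_bits sumn_nseq mulnC. Qed.

Lemma enc_seqK ys : dec_seq (size ys) (enc_seq ys) = ys.
Proof. by rewrite /dec_seq -shape_map_to_bits flattenK -map_comp (eq_map to_bitsK) map_id. Qed.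
End BitEncoding.

Lemma eq_avg r (f g : r.-tuple bool -> rat) : f =1 g -> avg f = avg g.
Proof. by move=> fg; rewrite /avg; congr (_ / _); apply: eq_bigr => c _; rewrite fg. Qed.

Lemma avg_const r (a : rat) : avg (fun _ : r.-tuple bool => a) = a.
Proof.
rewrite /avg sumr_const card_tuple card_bool -[a *+ _]mulr_natr mulfK //.
by rewrite pnatr_eq0 -lt0n expn_gt0.
Qed.

Lemma avg_transport r (T : finType) (card_T : #|{: r.-tuple bool}| = #|T|) (h : T -> rat) :
  avg (fun c => h (transport card_T c)) = (\sum_(y : T) h y) / (2 ^ r)%:R.
Proof.
rewrite /avg (reindex (untransport card_T)) /=; last first.
  by exists (transport card_T) => y _; rewrite ?transportK ?untransportK.
by under eq_bigr => y _ do rewrite untransportK.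
Qed.

Lemma two_thirds_le_ratio (g N : nat) : (2 * N <= 3 * g)%N -> (0 < N)%N ->
  2%:R / 3%:R <= g%:R / N%:R :> rat.
Proof.
move=> le_2N_3g N_gt0; rewrite ler_pdivlMr ?ltr0n // mulrAC ler_pdivrMr ?ltr0n //.
by rewrite -!natrM ler_nat [(g * _)%N]mulnC.
Qed.

Section Protocol.
Variables (F : finFieldType) (j m k t : nat).
Hypothesis card_F : #|F| = (2 ^ j)%N.
Hypothesis j_gt0 : (0 < j)%N.

(* [xval] and [edgeval] accumulate [mle_input] and the [edge_indicator] of the
   first hyperedge at [point]; [claim] is the current sum-check claim and [total]
   the prover's value for (Mx)_1. *)
Record vstate := VState {
  point : seq F;
  xval : F;
  edgeval : F;
  claim : F;
  total : F;
  edge_seen : bool;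
  w_first : bool;
  checks_ok : bool }.

Definition vstate_fields (s : vstate) : seq F :=
  point s ++ [:: xval s; edgeval s; claim s; total s;
                 (edge_seen s)%:R; (w_first s)%:R; (checks_ok s)%:R].

Definition vstate_of_fields (fs : seq F) : vstate :=
  VState (take m fs) (nth 0 fs m) (nth 0 fs (m + 1)) (nth 0 fs (m + 2)) (nth 0 fs (m + 3))
    (nth 0 fs (m + 4) != 0) (nth 0 fs (m + 5) != 0) (nth 0 fs (m + 6) != 0).

Definition enc_state (s : vstate) : seq bool := enc_seq card_F (vstate_fields s).
Definition dec_state (st : seq bool) : vstate := vstate_of_fields (dec_seq card_F (m + 7) st).

Lemma enc_stateK s : size (point s) = m -> dec_state (enc_state s) = s.
Proof.
have natr_bool_neq0 (b : bool) : ((b%:R : F) != 0) = b by case: b; rewrite ?oner_neq0 ?eqxx.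
case: s => r A B v H seen w0 ok /= sz_r.
rewrite /dec_state /enc_state.
have -> : (m + 7)%N = size (vstate_fields (VState r A B v H seen w0 ok)).
  by rewrite size_cat sz_r.
rewrite enc_seqK /vstate_of_fields /= take_size_cat // !nth_cat sz_r.
by rewrite !ltnNge !leq_addr leqnn subnn /= !addKn /= !natr_bool_neq0.
Qed.

Lemma size_enc_state s : size (enc_state s) = ((size (point s) + 7) * j)%N.
Proof. by rewrite size_enc_seq size_cat. Qed.

Let card_point : #|{: (j * m).-tuple bool}| = #|{: m.-tuple F}|.
Proof. by rewrite !card_tuple card_bool card_F expnM. Qed.

Definition fresh_state (c : (j * m).-tuple bool) : vstate :=
  VState (val (transport card_point c)) 0 0 0 0 false false true.

Definition absorb (s : vstate) (a : token (k * t) t) : vstate :=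
  match a with
  | XTok i b => VState (point s) (xval s + b%:R * mle_delta m i (point s)) (edgeval s)
                  (claim s) (total s) (edge_seen s) (w_first s) (checks_ok s)
  | ETok e b => if edge_seen s then s else
      VState (point s) (xval s) (\sum_(l < t) mle_delta m (tnth e l) (point s))
        (claim s) (total s) true b (checks_ok s)
  end.

(* The empty memory marks the first token; the random bits of that step choose
   the point. *)
Definition stream_step (st : seq bool) (a : token (k * t) t) (c : (j * m).-tuple bool) :=
  enc_state (absorb (if st == [::] then fresh_state c else dec_state st) a).

Definition enc_quad (p : {poly F}) : seq bool :=
  to_bits card_F p`_0 ++ to_bits card_F p`_1 ++ to_bits card_F p`_2.

Definition dec_quad (a : seq bool) : {poly F} :=
  (of_bits card_F (take j a))%:P + of_bits card_F (take j (drop j a)) *: 'X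
  + of_bits card_F (drop (2 * j) a) *: 'X^2.

Definition check_round (i : nat) (s : vstate) (g : {poly F}) : vstate :=
  VState (point s) (xval s) (edgeval s) g.[nth 0 (point s) i]
    (if i == 0%N then g.[0] + g.[1] else total s) (edge_seen s) (w_first s)
    (checks_ok s && ((i == 0%N) || (g.[0] + g.[1] == claim s))).

(* Coordinate [i - 1] of the point is revealed only after the prover has sent
   its polynomial for variable [i - 1]; the round-0 sum [g.[0] + g.[1]] is the
   claimed total rather than a check. *)
Definition challenge (i : nat) (st : seq bool) : seq bool :=
  if i == 0%N then [::] else to_bits card_F (nth 0 (point (dec_state st)) i.-1).

Definition receive (i : nat) (st a : seq bool) : seq bool :=
  enc_state (check_round i (dec_state st) (dec_quad a)).

Definition decide (H : F) (w0 : bool) : option bool :=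
  if H == 0 then Some (~~ w0) else if H == 1 then Some w0 else None.

Definition verdict (st : seq bool) : option bool :=
  let s := dec_state st in
  if checks_ok s && (claim s == xval s * edgeval s) then decide (total s) (w_first s) else None.

Definition bhh_sip : SIP (k * t) t :=
  {| rho := j * m; init := [::]; step := stream_step; rounds := m;
     vlen := fun _ => j; plen := fun _ => (3 * j)%N;
     vmsg := fun i st _ => (st, challenge i st); vrecv := fun i st a _ => receive i st a;
     output := verdict |}.

Lemma size_point_absorb s a : size (point (absorb s a)) = size (point s).
Proof. by case: a => [i b|e b] //=; case: edge_seen. Qed.

Lemma size_point_dec st : (size (point (dec_state st)) <= m)%N.
Proof. by rewrite size_take; case: ltnP => // /ltnW. Qed.

Lemma bhh_sip_cost cost : ((m + 7) * j <= cost)%N -> (4 * j * m <= cost)%N ->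
  SIP_cost_ok bhh_sip cost.
Proof.
move=> state_le comm_le; split => //=.
- move=> st a c _; rewrite /stream_step size_enc_state size_point_absorb.
  apply: leq_trans state_le; rewrite leq_mul2r leq_add2r orbC.
  by case: (st == [::]); rewrite /= ?size_tuple ?size_point_dec ?leqnn.
- by move=> i st c ?; split => //; rewrite /challenge; case: ifP => _; rewrite ?size_to_bits.
- move=> i st a c _ _; rewrite /receive size_enc_state /=.
  by apply: leq_trans state_le; rewrite leq_mul2r leq_add2r size_point_dec orbT.
- by rewrite sum_nat_const card_ord (leq_trans _ comm_le) //; lia.
Qed.

Lemma run_stream_enc ss s0 (G : seq bool -> rat) : size (point s0) = m ->
  run_stream bhh_sip (enc_state s0) ss G = G (enc_state (foldl absorb s0 ss)).
Proof.
elim: ss s0 => [|a ss IH] s0 sz_s0 //=.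
have enc_nil : (enc_state s0 == [::]) = false.
  by rewrite -size_eq0 size_enc_state muln_eq0 addn_eq0 andbF eqn0Ngt j_gt0.
rewrite -[RHS](avg_const (j * m)); apply: eq_avg => c.
by rewrite /= /stream_step enc_nil enc_stateK // IH // size_point_absorb.
Qed.

Lemma run_stream_start a ss (G : seq bool -> rat) :
  run_stream bhh_sip [::] (a :: ss) G =
  avg (fun c => G (enc_state (foldl absorb (fresh_state c) (a :: ss)))).
Proof.
apply: eq_avg => c.
have -> : @step _ _ bhh_sip [::] a c = enc_state (absorb (fresh_state c) a).
  by rewrite /= /stream_step eqxx.
by apply: run_stream_enc; rewrite size_point_absorb /= size_tuple.
Qed.

(* The verifier ignores its random bits in the interactive phase. *)
Fixpoint inter_outcome (P : prover) fuel i tr st : option bool :=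
  if fuel is fuel'.+1 then
    let tr' := rcons tr (challenge i st) in
    inter_outcome P fuel' i.+1 tr' (receive i st (take (3 * j) (P tr')))
  else verdict st.

Lemma run_interE P fuel i tr st (G : option bool -> rat) :
  run_inter bhh_sip P fuel i tr st G = G (inter_outcome P fuel i tr st).
Proof.
elim: fuel i tr st => [|fuel IH] i tr st //=.
by rewrite -[RHS](avg_const (j * m)); apply: eq_avg => c; rewrite IH avg_const.
Qed.

(* The leading [[::]] is the empty round-0 message. *)
Definition prover_poly (P : prover) (rho : seq F) : {poly F} :=
  dec_quad (take (3 * j) (P ([::] :: map (to_bits card_F) rho))).

Lemma inter_outcome_rounds P (f : seq F -> F) d : forall i s, (i + d)%N = m -> (0 < i)%N ->
  size (point s) = m -> xval s * edgeval s = f (point s) ->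
  inter_outcome P d i ([::] :: map (to_bits card_F) (take i.-1 (point s))) (enc_state s) =
  if checks_ok s && sumcheck_accepts f (prover_poly P) d (take i (point s)) (claim s)
                      (drop i (point s))
  then decide (total s) (w_first s) else None.
Proof.
elim: d => [|d IH] i s id_m i_gt0 sz_s final_ok.
  rewrite /= /verdict enc_stateK // final_ok.
  by move: id_m; rewrite addn0 => ->; rewrite take_oversize ?sz_s.
have lt_i_m : (i < m)%N by rewrite -id_m; lia.
have lt_pred_i : (i.-1 < size (point s))%N by rewrite sz_s; lia.
have i_neq0 : (i == 0%N) = false by case: (i) i_gt0.
rewrite /= /challenge /receive i_neq0 enc_stateK // -map_rcons -(take_nth 0 lt_pred_i).
rewrite prednK //; have := IH i.+1 (check_round i s (prover_poly P (take i (point s)))).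
rewrite /= i_neq0 sz_s => -> //; last by rewrite -id_m addnS.
by rewrite [drop i _](drop_nth 0) ?sz_s // -(take_nth 0) ?sz_s //= andbA.
Qed.

Lemma inter_outcome_all P (f : seq F -> F) s : (0 < m)%N -> size (point s) = m ->
  checks_ok s -> xval s * edgeval s = f (point s) ->
  inter_outcome P m 0 [::] (enc_state s) =
  (let H := (prover_poly P [::]).[0] + (prover_poly P [::]).[1] in
   if sumcheck_accepts f (prover_poly P) m [::] H (point s) then decide H (w_first s) else None).
Proof.
move=> m_gt0 sz_s ok_s final_ok.
rewrite -(prednK m_gt0) /= /receive /challenge eqxx enc_stateK //.
have := @inter_outcome_rounds P f m.-1 1 (check_round 0 s (prover_poly P [::])).
rewrite /= sz_s ok_s take0 => -> //; last by rewrite add1n prednK.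
by move: sz_s m_gt0; case: (point s) => [<-|r0 r' _ _] //=; rewrite take0 drop0 eqxx.
Qed.

Lemma foldl_absorb_input (x : {ffun 'I_(k * t) -> bool}) l s :
  foldl absorb s [seq XTok t i (x i) | i <- l] =
  VState (point s) (xval s + \sum_(i <- l) (x i)%:R * mle_delta m i (point s)) (edgeval s)
    (claim s) (total s) (edge_seen s) (w_first s) (checks_ok s).
Proof.
elim: l s => [|i l IH] s /=; first by rewrite big_nil addr0; case: s.
by rewrite IH /= big_cons addrA.
Qed.

Lemma foldl_absorb_seen (E : 'I_k -> t.-tuple 'I_(k * t)) (w : 'I_k -> bool) l s :
  edge_seen s -> foldl absorb s [seq ETok (E r) (w r) | r <- l] = s.
Proof. by elim: l s => [|r l IH] s //= seen; rewrite seen IH. Qed.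

Lemma absorb_bhh_stream x M w r0 rest c : enum 'I_k = r0 :: rest ->
  let r := val (transport card_point c) in
  foldl absorb (fresh_state c) (BHH_stream x M w) =
  VState r (mle_input m x r) (edge_indicator m (tnth M r0) r) 0 0 true (tnth w r0) true.
Proof.
move=> enum_k; rewrite /BHH_stream foldl_cat foldl_absorb_input enum_k /=.
by rewrite foldl_absorb_seen ?add0r.
Qed.

Definition outcome x (M : k.-tuple (t.-tuple 'I_(k * t))) (w : k.-tuple bool) (r0 : 'I_k)
    (P : prover) (r : seq F) : option bool :=
  let H := (prover_poly P [::]).[0] + (prover_poly P [::]).[1] in
  if sumcheck_accepts (bhh_poly m x (tnth M r0)) (prover_poly P) m [::] H r
  then decide H (tnth w r0) else None.

Lemma prob_outE x M w r0 rest P (O : pred (option bool)) :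
  (0 < m)%N -> (0 < k * t)%N -> enum 'I_k = r0 :: rest ->
  prob_out bhh_sip P (BHH_stream x M w) O =
  (\sum_(r : m.-tuple F) (O (outcome x M w r0 P r))%:R) / (2 ^ (j * m))%:R.
Proof.
move=> m_gt0 kt_gt0 enum_k; rewrite /prob_out /=.
have [a [ss stream_eq]] : exists a ss, BHH_stream x M w = a :: ss.
  rewrite /BHH_stream; case: (enum 'I_(k * t)) (size_enum_ord (k * t)) => [szE|i s _].
    by rewrite -szE in kt_gt0.
  by do 2 eexists.
rewrite stream_eq run_stream_start -stream_eq -(avg_transport card_point).
apply: eq_avg => c; rewrite (absorb_bhh_stream _ _ _ _ enum_k) run_interE.
by rewrite (@inter_outcome_all P (bhh_poly m x (tnth M r0))) ?size_tuple.
Qed.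

Lemma size_dec_quad a : (size (dec_quad a) <= 3)%N.
Proof.
rewrite /dec_quad (leq_trans (size_polyD _ _)) // geq_max.
rewrite (leq_trans (size_scale_leq _ _)) ?size_polyXn // andbT.
rewrite (leq_trans (size_polyD _ _)) // geq_max (leq_trans (size_polyC_leq1 _)) //.
by rewrite (leq_trans (size_scale_leq _ _)) ?size_polyX.
Qed.

Lemma enc_quadK (p : {poly F}) : (size p <= 3)%N -> dec_quad (take (3 * j) (enc_quad p)) = p.
Proof.
move=> sz_p; rewrite /enc_quad take_oversize; last by rewrite !size_cat !size_to_bits; lia.
rewrite /dec_quad take_size_cat ?size_to_bits // drop_size_cat ?size_to_bits //.
rewrite take_size_cat ?size_to_bits // mul2n -addnn -drop_drop !drop_size_cat ?size_to_bits //.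
rewrite !to_bitsK; apply/polyP => i; rewrite !coefD coefC !coefZ coefX coefXn.
case: i => [|[|[|i]]] /=; rewrite ?mulr0 ?mulr1 ?addr0 ?add0r //.
by rewrite nth_default // (leq_trans sz_p).
Qed.

Section HonestProver.
Variable f : seq F -> F.
Hypothesis f_quadratic : forall rho s, (size rho < m)%N -> polyfun_le 2 (fun X => f (rho ++ X :: s)).

Lemma exists_round_poly rho : exists p : {poly F}, (size p <= 3)%N &&
  ((size rho < m)%N ==> [forall X, p.[X] == cube_sum m f (rcons rho X)]).
Proof.
case: (ltnP (size rho) m) => [lt_rho_m|]; last by exists 0; rewrite size_poly0.
have [p sz_p pE] := cube_sum_polyfun f_quadratic lt_rho_m.
by exists p; rewrite sz_p; apply/forallP => X; rewrite pE.
Qed.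

Definition honest_poly rho : {poly F} := xchoose (exists_round_poly rho).

Lemma size_honest_poly rho : (size (honest_poly rho) <= 3)%N.
Proof. by case/andP: (xchooseP (exists_round_poly rho)). Qed.

Lemma honest_polyE rho X : (size rho < m)%N -> (honest_poly rho).[X] = cube_sum m f (rcons rho X).
Proof.
move=> lt_rho_m; case/andP: (xchooseP (exists_round_poly rho)) => _.
by move=> /implyP/(_ lt_rho_m)/forallP/(_ X)/eqP.
Qed.

Definition honest_prover : prover :=
  fun tr => enc_quad (honest_poly (map (of_bits card_F) (behead tr))).

Lemma prover_poly_honest rho : prover_poly honest_prover rho = honest_poly rho.
Proof.
by rewrite /prover_poly /honest_prover /= -map_comp (eq_map (to_bitsK _)) map_id
  enc_quadK // size_honest_poly.
Qed.
End HonestProver.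

Section Correctness.
Variables (x : {ffun 'I_(k * t) -> bool}) (M : k.-tuple (t.-tuple 'I_(k * t)))
  (w : k.-tuple bool) (b : bool) (r0 : 'I_k).
Hypotheses (m_gt0 : (0 < m)%N) (le_kt_cube : (k * t <= 2 ^ m)%N) (char2 : 2%:R = 0 :> F)
  (large_F : (6 * m <= #|F|)%N) (answer_b : BHH_answer x M w b).

Let f : seq F -> F := bhh_poly m x (tnth M r0).
Let f_quadratic rho s : (size rho < m)%N -> polyfun_le 2 (fun X => f (rho ++ X :: s)).
Proof. exact: bhh_poly_quadratic. Qed.

Lemma decide_cube_sum : decide (cube_sum m f [::]) (tnth w r0) = Some b.
Proof.
have := answer_b r0; rewrite /f cube_sum_bhh_poly // /decide -/(Mx M x r0).
by case: (Mx M x r0); rewrite ?oner_eq0 eqxx; case: (tnth w r0); case: b.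
Qed.

Lemma outcome_honest r : size r = m -> outcome x M w r0 (honest_prover f_quadratic) r = Some b.
Proof.
move=> sz_r; rewrite /outcome !prover_poly_honest.
have total_ok : (honest_poly f_quadratic [::]).[0] + (honest_poly f_quadratic [::]).[1] =
                cube_sum m f [::] by rewrite !honest_polyE // -cube_sum_split.
rewrite total_ok sumcheck_complete ?decide_cube_sum //.
by move=> rho X lt_rho_m; rewrite prover_poly_honest honest_polyE.
Qed.

Lemma count_outcome_wrong P :
  ((\sum_(r : m.-tuple F) (outcome x M w r0 P r == Some (~~ b))) * 3 <= #|F| ^ m)%N.
Proof.
set H := (prover_poly P [::]).[0] + (prover_poly P [::]).[1].
have [H_ok|H_wrong] := eqVneq H (cube_sum m f [::]).
  rewrite big1 // => r _; rewrite /outcome -/H H_ok decide_cube_sum.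
  by case: sumcheck_accepts => //; case: b.
have := sumcheck_sound f_quadratic (G := prover_poly P) (fun rho => size_dec_quad _)
  (d := m) (rho := [::]) erefl H_wrong.
have le_wrong_accepts : (\sum_(r : m.-tuple F) (outcome x M w r0 P r == Some (~~ b)) <=
    \sum_(r : m.-tuple F) sumcheck_accepts f (prover_poly P) m [::] H r)%N.
  by apply: leq_sum => r _; rewrite /outcome -/H; case: sumcheck_accepts; rewrite ?leq_b1.
have F_gt0 : (0 < #|F|)%N by rewrite card_F expn_gt0.
move: le_wrong_accepts large_F; rewrite -(leq_pmul2r F_gt0).
set a := (\sum_(r : _) _)%N; set c := (\sum_(r : _) _)%N.
move: (#|F| ^ m)%N => K; clearbody a c; nia.
Qed.

Lemma card_point_tuples : (2 ^ (j * m))%N = (#|F| ^ m)%N.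
Proof. by rewrite card_F expnM. Qed.

Let tuples_gt0 : (0 < #|F| ^ m)%N.
Proof. by rewrite expn_gt0 card_F expn_gt0. Qed.

Lemma prob_complete rest : (0 < k * t)%N -> enum 'I_k = r0 :: rest ->
  2%:R / 3%:R <= prob_out bhh_sip (honest_prover f_quadratic) (BHH_stream x M w) (pred1 (Some b)).
Proof.
move=> kt_gt0 enum_k; rewrite (prob_outE _ _ _ _ _ m_gt0 kt_gt0 enum_k) -natr_sum.
rewrite card_point_tuples two_thirds_le_ratio // (eq_bigr (fun=> 1%N)) => [|r _].
  by rewrite sum1_card card_tuple leq_mul2r leqnSn orbT.
by rewrite /= outcome_honest ?size_tuple ?eqxx.
Qed.

Lemma prob_sound P rest : (0 < k * t)%N -> enum 'I_k = r0 :: rest ->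
  2%:R / 3%:R <= prob_out bhh_sip P (BHH_stream x M w) (fun o => o != Some (~~ b)).
Proof.
move=> kt_gt0 enum_k; rewrite (prob_outE _ _ _ _ _ m_gt0 kt_gt0 enum_k) -natr_sum.
rewrite card_point_tuples two_thirds_le_ratio //.
have : (\sum_(r : m.-tuple F) (outcome x M w r0 P r != Some (~~ b)) +
        \sum_(r : m.-tuple F) (outcome x M w r0 P r == Some (~~ b)) = #|F| ^ m)%N.
  rewrite -big_split /= (eq_bigr (fun=> 1%N)) => [|r _]; first by rewrite sum1_card card_tuple.
  by case: eqP.
by have := count_outcome_wrong P; rewrite /=; lia.
Qed.
End Correctness.

Lemma bhh_sip_solves : (0 < m)%N -> (k * t <= 2 ^ m)%N -> 2%:R = 0 :> F ->
  (6 * m <= #|F|)%N -> (0 < k * t)%N -> SIP_solves_BHH bhh_sip.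
Proof.
move=> m_gt0 le_kt_cube char2 large_F kt_gt0 x M w b _ answer_b.
case enum_k: (enum 'I_k) => [|r0 rest].
  by have := size_enum_ord k; rewrite enum_k => /= k0; rewrite -k0 in kt_gt0.
split; first by eexists; apply: (prob_complete m_gt0 le_kt_cube char2 answer_b kt_gt0 enum_k).
by move=> P; apply: (prob_sound m_gt0 le_kt_cube char2 large_F answer_b P kt_gt0 enum_k).
Qed.
End Protocol.

Lemma lg_ge2 n : (4 <= n)%N -> (2 <= lg n)%N.
Proof. exact: leq_up_log 2 4 n. Qed.

Local Close Scope ring_scope.

Theorem lemma13 :
  exists C : nat, forall t k : nat, (0 < t)%N -> (0 < k)%N -> (4 <= k * t)%N ->
    exists V : SIP (k * t) t,
      SIP_cost_ok V (C * t * lg (k * t) * lg (lg (k * t))) /\ SIP_solves_BHH V.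
Proof.
exists 20 => t k t_gt0 k_gt0 kt_ge4.
set m := lg (k * t); set L := lg m.
have m_ge2 : 2 <= m by apply: lg_ge2.
have L_gt0 : 0 < L by rewrite up_log_gt0 m_ge2.
have le_m_cube : m <= 2 ^ L by apply: up_logP.
have [F char2 card_F] := @pPrimePowerField 2 (L + 3) isT (ltn_addl L (isT : 0 < 3)).
exists (bhh_sip m k t card_F); split.
  by apply: bhh_sip_cost; nia.
apply: bhh_sip_solves.
- by rewrite addn3.
- lia.
- exact: up_logP.
- exact: pcharf0 char2.
- by rewrite card_F expnD; nia.
- lia.
Qed.
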